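(* For any $a,b>0$, the restriction of $J$ to $\mathcal P_{(a,b)}$ is coercive, i.e. $J(u,v)\to+\infty$ whenever $(u,v)\in\mathcal P_{(a,b)}$ and $\|(u,v)\|_{\mathbb D}\to\infty$.
   Context: Standing assumptions: $s\in(\tfrac12,1)$, $\mu_1,\mu_2,\beta>0$, $r_1,r_2>1$, $\frac{2(1+3s)}{1+s}<p,q,r_1+r_2<2_s=\frac{2(1+s)}{1-s}$. $\mathcal H^{1,s}(\mathbb R^2)$: $u\in L^2(\mathbb R^2)$ with $\partial_xu,(-\Delta)_y^{s/2}u\in L^2$ ($(-\Delta)_y^{s/2}$ the fractional Laplacian in $y$ only), norm $\|u\|^2=\|u\|_2^2+\|\partial_xu\|_2^2+\|(-\Delta)_y^{s/2}u\|_2^2$; $\mathbb D=\mathcal H^{1,s}\times\mathcal H^{1,s}$ with $\|(u,v)\|_{\mathbb D}^2=\|u\|^2+\|v\|^2$; $K(u)=\int(|\partial_xu|^2+|(-\Delta)_y^{s/2}u|^2)$. $J(u,v)=\tfrac12K(u)+\tfrac12K(v)-\frac{\mu_1}{p}\|u\|_p^p-\frac{\mu_2}{q}\|v\|_q^q-\beta\int|u|^{r_1}|v|^{r_2}$; $P(u,v)=sK(u)+sK(v)-\frac{(1+s)(p-2)}{2p}\mu_1\|u\|_p^p-\frac{(1+s)(q-2)}{2q}\mu_2\|v\|_q^q-\frac{(1+s)(r_1+r_2-2)}{2}\beta\int|u|^{r_1}|v|^{r_2}$; $\mathcal P=\{(u,v)\ne(0,0):P(u,v)=0\}$; $D_a=\{u:\|u\|_2^2\le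 a\}$; $\mathcal P_{(a,b)}=\mathcal P\cap(D_a\times D_b)$. *)

From HB Require Import structures.
From mathcomp Require Import all_boot all_order all_algebra.
From mathcomp Require Import all_classical all_reals all_analysis.
Set Implicit Arguments. Unset Strict Implicit. Unset Printing Implicit Defensive.
Import Order.TTheory GRing.Theory Num.Theory.
Import numFieldNormedType.Exports.
Local Open Scope classical_set_scope.
Local Open Scope ring_scope.

Section Defs.
Variable R : realType.

Definition leb1 := (@lebesgue_measure R).
Definition leb2 := (leb1 \x leb1)%E.

Definition Lpow (f : R * R -> R) (p : R) : \bar R :=
  (\int[leb2]_z (`|f z| `^ p)%:E)%E.

Definition Lmix (u v : R * R -> R) (r1 r2 : R) : \bar R :=
  (\int[leb2]_z ((`|u z| `^ r1) * (`|v z| `^ r2))%:E)%E.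

Definition gagliardo_y (s : R) (u : R * R -> R) : \bar R :=
  (\int[leb2]_z \int[leb1]_y'
     ((u z - u (z.1, y')) ^+ 2 / (`|z.2 - y'| `^ (1 + 2 * s)))%:E)%E.

(* Normalising constant C(1,s) = (\int_R (1 - cos t)/|t|^{1+2s} dt)^{-1}
   (Di Nezza--Palatucci--Valdinoci, (3.2)). *)
Definition Cfrac (s : R) : R :=
  (fine (\int[leb1]_t ((1 - cos t) / (`|t| `^ (1 + 2 * s)))%:E)%E)^-1.

(* ||(-Delta)_y^{s/2} u||_2^2 = C(1,s)/2 * Gagliardo_y(u)   (DNPV Prop. 3.4/3.6) *)
Definition fracy_norm2 (s : R) (u : R * R -> R) : \bar R :=
  ((Cfrac s / 2)%:E * gagliardo_y s u)%E.

Definition dx (phi : R * R -> R) (z : R * R) : R :=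
  'D_1 (fun t => phi (t, z.2)) z.1.

Definition test_fun (phi : R * R -> R) : Prop :=
  [/\ continuous phi,
      (exists B : R, forall z, B < `|z.1| \/ B < `|z.2| -> phi z = 0),
      (forall z, derivable (fun t => phi (t, z.2)) z.1 1)
    & continuous (dx phi)].

Definition weak_dx (u g : R * R -> R) : Prop :=
  forall phi, test_fun phi ->
    (\int[leb2]_z (u z * dx phi z)%:E = - \int[leb2]_z (g z * phi z)%:E)%E.

Definition inH1s (s : R) (u g : R * R -> R) : Prop :=
  [/\ measurable_fun setT u /\ measurable_fun setT g,
      (Lpow u 2 < +oo)%E, (Lpow g 2 < +oo)%E, weak_dx u g
    & (gagliardo_y s u < +oo)%E].

Definition Kf (s : R) (u g : R * R -> R) : \bar R :=
  (Lpow g 2 + fracy_norm2 s u)%E.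

Definition normH2 (s : R) (u g : R * R -> R) : \bar R :=
  (Lpow u 2 + Kf s u g)%E.

Definition normD2 (s : R) (u gu v gv : R * R -> R) : \bar R :=
  (normH2 s u gu + normH2 s v gv)%E.

Definition Jf (s mu1 mu2 beta r1 r2 p q : R) (u gu v gv : R * R -> R) : \bar R :=
  ((2^-1)%:E * Kf s u gu + (2^-1)%:E * Kf s v gv
   - (mu1 / p)%:E * Lpow u p - (mu2 / q)%:E * Lpow v q
   - beta%:E * Lmix u v r1 r2)%E.

Definition Pf (s mu1 mu2 beta r1 r2 p q : R) (u gu v gv : R * R -> R) : \bar R :=
  (s%:E * Kf s u gu + s%:E * Kf s v gv
   - ((1 + s) * (p - 2) / (2 * p) * mu1)%:E * Lpow u p
   - ((1 + s) * (q - 2) / (2 * q) * mu2)%:E * Lpow v q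
   - ((1 + s) * (r1 + r2 - 2) / 2 * beta)%:E * Lmix u v r1 r2)%E.

Definition is_zero2 (u v : R * R -> R) : Prop :=
  ({ae leb2, forall z, u z = 0%R}%E) /\ ({ae leb2, forall z, v z = 0%R}%E).

End Defs.

From HB Require Import structures.
From mathcomp Require Import all_boot all_order all_algebra.
From mathcomp Require Import all_classical all_reals all_analysis.
From mathcomp Require Import ring lra.
Set Implicit Arguments. Unset Strict Implicit. Unset Printing Implicit Defensive.
Import Order.TTheory GRing.Theory Num.Theory.
Import numFieldNormedType.Exports.
Local Open Scope ring_scope.

(* On the Pohozaev set, [P = 0] reads [s (K(u) + K(v)) = sum_x e_x c_x N_x], where the
   [c_x N_x] are the nonlinear terms of [J] and [e_x = (1 + s)(x - 2)/2 > 2 s] precisely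
   because [x > 2(1 + 3s)/(1 + s)].  With [m] the least [e_x] this gives
   [J = (K(u) + K(v))/2 - sum_x c_x N_x >= (m - 2 s)/(2 m) (K(u) + K(v))],
   whereas on [D_a x D_b] the squared norm is at most [a + b + K(u) + K(v)]. *)

Lemma L2_supercritical_gap (R : realFieldType) (s x : R) :
  0 < s -> 2 * (1 + 3 * s) / (1 + s) < x -> 2 * s < (1 + s) * (x - 2) / 2.
Proof.
move=> s_gt0; have s1_gt0 : 0 < 1 + s by lra.
rewrite ltr_pdivrMr // => hx.
by rewrite ltr_pdivlMr //; nra.
Qed.

Lemma Pohozaev_energy_bound (R : realFieldType) (s m K D1 D2 D3 e1 e2 e3 : R) :
  0 < m -> m <= e1 -> m <= e2 -> m <= e3 -> 0 <= D1 -> 0 <= D2 -> 0 <= D3 ->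
  s * K = e1 * D1 + e2 * D2 + e3 * D3 ->
  (m - 2 * s) / (2 * m) * K <= K / 2 - D1 - D2 - D3.
Proof.
move=> m_gt0 m_le_e1 m_le_e2 m_le_e3 D1_ge0 D2_ge0 D3_ge0 sK_eq.
have mD : m * (D1 + D2 + D3) <= s * K by rewrite sK_eq; nra.
have -> : (m - 2 * s) / (2 * m) * K = K / 2 - s * K / m by field; lra.
suff : D1 + D2 + D3 <= s * K / m by lra.
by rewrite ler_pdivlMr // mulrC.
Qed.

Section Functionals.
Variable R : realType.
Local Open Scope ereal_scope.

Lemma Lpow_ge0 (f : R * R -> R) (p : R) : 0 <= Lpow f p.
Proof. by apply: integral_ge0 => z _; rewrite lee_fin powR_ge0. Qed.

Lemma Lmix_ge0 (u v : R * R -> R) (r1 r2 : R) : 0 <= Lmix u v r1 r2.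
Proof. by apply: integral_ge0 => z _; rewrite lee_fin mulr_ge0 ?powR_ge0. Qed.

Lemma Cfrac_ge0 (s : R) : (0 <= Cfrac s)%R.
Proof.
rewrite invr_ge0 fine_ge0 //; apply: integral_ge0 => t _.
by rewrite lee_fin divr_ge0 ?powR_ge0 // subr_ge0 cos_le1.
Qed.

Lemma gagliardo_y_ge0 (s : R) (u : R * R -> R) : 0 <= gagliardo_y s u.
Proof.
apply: integral_ge0 => z _; apply: integral_ge0 => y _.
by rewrite lee_fin divr_ge0 ?sqr_ge0 ?powR_ge0.
Qed.

Lemma Kf_ge0 (s : R) (u g : R * R -> R) : 0 <= Kf s u g.
Proof.
rewrite adde_ge0 ?Lpow_ge0 // mule_ge0 ?gagliardo_y_ge0 //.
by rewrite lee_fin divr_ge0 ?Cfrac_ge0.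
Qed.

Lemma Kf_fin_num (s : R) (u g : R * R -> R) : inH1s s u g -> Kf s u g \is a fin_num.
Proof.
case=> _ _ g_fin _ gag_fin.
rewrite -ge0_fin_numE ?Lpow_ge0 // in g_fin.
rewrite -ge0_fin_numE ?gagliardo_y_ge0 // in gag_fin.
by rewrite fin_numD g_fin fin_numM.
Qed.

Lemma normD2_le (s a b : R) (u gu v gv : R * R -> R) :
  inH1s s u gu -> inH1s s v gv -> Lpow u 2 <= a%:E -> Lpow v 2 <= b%:E ->
  normD2 s u gu v gv <= (a + b + fine (Kf s u gu + Kf s v gv))%:E.
Proof.
move=> /Kf_fin_num Ku_fin /Kf_fin_num Kv_fin ua vb.
rewrite /normD2 /normH2 -(fineK Ku_fin) -(fineK Kv_fin) /= !EFinD.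
by rewrite addeACA; apply: leeD; apply: leeD.
Qed.

End Functionals.

Section Coercivity.
Variables (R : realType) (s mu1 mu2 beta r1 r2 p q : R).
Hypotheses (s_gt0 : 0 < s) (mu1_gt0 : 0 < mu1) (mu2_gt0 : 0 < mu2)
  (beta_gt0 : 0 < beta) (p_gt0 : 0 < p) (q_gt0 : 0 < q).

(* In [Pf] the x-homogeneous term of [Jf] carries the extra weight [e x]. *)
Local Notation e x := ((1 + s) * (x - 2) / 2).

Hypotheses (gap_p : 2 * s < e p) (gap_q : 2 * s < e q) (gap_r : 2 * s < e (r1 + r2)).

Let m := Num.min (e p) (Num.min (e q) (e (r1 + r2))).

Let gap_m : 2 * s < m. Proof. by rewrite !lt_min gap_p gap_q gap_r. Qed.
Let m_gt0 : 0 < m. Proof. by apply: le_lt_trans gap_m; rewrite mulr_ge0 ?ltW. Qed.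
Let m_le_ep : m <= e p. Proof. by rewrite /m ge_min lexx. Qed.
Let m_le_eq : m <= e q. Proof. by rewrite /m !ge_min lexx orbT. Qed.
Let m_le_er : m <= e (r1 + r2). Proof. by rewrite /m !ge_min lexx !orbT. Qed.

Let e_gt0 x : 2 * s < e x -> 0 < e x.
Proof. by apply: le_lt_trans; rewrite mulr_ge0 ?ltW. Qed.

Let Pf_coefE x mu : 0 < x -> (1 + s) * (x - 2) / (2 * x) * mu = e x * (mu / x).
Proof. by move=> x_gt0; field; lra. Qed.

Local Open Scope ereal_scope.

Lemma Pf_eq0_fin_num (u gu v gv : R * R -> R) :
  Pf s mu1 mu2 beta r1 r2 p q u gu v gv = 0 ->
  [/\ Lpow u p \is a fin_num, Lpow v q \is a fin_num & Lmix u v r1 r2 \is a fin_num].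
Proof.
rewrite /Pf !Pf_coefE // => hP.
(* An infinite nonlinear term would make [Pf] equal to [-oo], since [-oo] absorbs [+oo]. *)
have sub_pinfty (c : R) (x : \bar R) : (0 < c)%R -> x - c%:E * +oo = -oo.
  by move=> c_gt0; rewrite mulry gtr0_sg // mul1e addeNy.
split.
- rewrite ge0_fin_numE ?Lpow_ge0 // ltey; apply/eqP => A_oo; move: hP.
  by rewrite A_oo sub_pinfty ?addNye // mulr_gt0 ?e_gt0 ?divr_gt0.
- rewrite ge0_fin_numE ?Lpow_ge0 // ltey; apply/eqP => B_oo; move: hP.
  by rewrite B_oo sub_pinfty ?addNye // mulr_gt0 ?e_gt0 ?divr_gt0.
- rewrite ge0_fin_numE ?Lmix_ge0 // ltey; apply/eqP => C_oo; move: hP.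
  by rewrite C_oo sub_pinfty // mulr_gt0 ?e_gt0.
Qed.

Lemma Pf_eq0_Jf_lower_bound (u gu v gv : R * R -> R) :
  inH1s s u gu -> inH1s s v gv -> Pf s mu1 mu2 beta r1 r2 p q u gu v gv = 0 ->
  ((m - 2 * s) / (2 * m) * fine (Kf s u gu + Kf s v gv))%:E
    <= Jf s mu1 mu2 beta r1 r2 p q u gu v gv.
Proof.
move=> /Kf_fin_num Ku_fin /Kf_fin_num Kv_fin hP.
have [A_fin B_fin C_fin] := Pf_eq0_fin_num hP.
move: hP; rewrite /Pf /Jf !Pf_coefE //.
move: (Lpow_ge0 u p) (Lpow_ge0 v q) (Lmix_ge0 u v r1 r2).
move: (Kf s u gu) (Kf s v gv) (Lpow u p) (Lpow v q) (Lmix u v r1 r2)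
  Ku_fin Kv_fin A_fin B_fin C_fin.
move=> [ku| |] // [kv| |] // [A| |] // [B| |] // [C| |] // _ _ _ _ _.
rewrite !lee_fin => A_ge0 B_ge0 C_ge0.
rewrite -!EFinM -!EFinD -?EFinB /= => /eqP; rewrite eqe => /eqP hP.
have sK_eq : (s * (ku + kv)
    = e p * (mu1 / p * A) + e q * (mu2 / q * B) + e (r1 + r2) * (beta * C))%R.
  by apply/eqP; rewrite -subr_eq0 -hP; apply/eqP; ring.
have D1_ge0 : (0 <= mu1 / p * A)%R by rewrite mulr_ge0 // divr_ge0 // ltW.
have D2_ge0 : (0 <= mu2 / q * B)%R by rewrite mulr_ge0 // divr_ge0 // ltW.
have D3_ge0 : (0 <= beta * C)%R by rewrite mulr_ge0 // ltW.
have := Pohozaev_energy_bound m_gt0 m_le_ep m_le_eq m_le_er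
  D1_ge0 D2_ge0 D3_ge0 sK_eq.
lra.
Qed.

Lemma Jf_coercive_on_Pf (a b M : R) : exists R0 : R, forall u gu v gv : R * R -> R,
  inH1s s u gu -> inH1s s v gv -> Pf s mu1 mu2 beta r1 r2 p q u gu v gv = 0 ->
  Lpow u 2 <= a%:E -> Lpow v 2 <= b%:E -> R0%:E <= normD2 s u gu v gv ->
  M%:E <= Jf s mu1 mu2 beta r1 r2 p q u gu v gv.
Proof.
pose c := ((m - 2 * s) / (2 * m))%R.
have c_gt0 : (0 < c)%R by rewrite divr_gt0 ?subr_gt0 ?mulr_gt0.
exists (a + b + `|M| / c)%R => u gu v gv hu hv hP ua vb hR.
apply: le_trans _ (Pf_eq0_Jf_lower_bound hu hv hP); rewrite lee_fin.
have : (`|M| / c <= fine (Kf s u gu + Kf s v gv))%R.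
  by have := le_trans hR (normD2_le hu hv ua vb); rewrite lee_fin; lra.
rewrite ler_pdivrMr // mulrC => hK.
exact: le_trans (ler_norm M) hK.
Qed.

End Coercivity.

Theorem corollary3p6 (R : realType) (s mu1 mu2 beta r1 r2 p q : R) :
  2^-1 < s -> s < 1 -> 0 < mu1 -> 0 < mu2 -> 0 < beta -> 1 < r1 -> 1 < r2 ->
  2 * (1 + 3 * s) / (1 + s) < p -> p < 2 * (1 + s) / (1 - s) ->
  2 * (1 + 3 * s) / (1 + s) < q -> q < 2 * (1 + s) / (1 - s) ->
  2 * (1 + 3 * s) / (1 + s) < r1 + r2 -> r1 + r2 < 2 * (1 + s) / (1 - s) ->
  forall a b : R, 0 < a -> 0 < b ->
  forall M : R, exists R0 : R,
    forall u gu v gv : R * R -> R,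
      inH1s s u gu -> inH1s s v gv ->
      ~ is_zero2 u v ->
      Pf s mu1 mu2 beta r1 r2 p q u gu v gv = 0%E ->
      (Lpow u 2 <= a%:E)%E -> (Lpow v 2 <= b%:E)%E ->
      (R0%:E <= normD2 s u gu v gv)%E ->
      (M%:E <= Jf s mu1 mu2 beta r1 r2 p q u gu v gv)%E.
Proof.
move=> s_half _ mu1_gt0 mu2_gt0 beta_gt0 _ _ p_gt _ q_gt _ r_gt _ a b _ _ M.
have s_gt0 : 0 < s by apply: lt_trans s_half; rewrite invr_gt0.
have exponent_gt0 x : 2 * (1 + 3 * s) / (1 + s) < x -> 0 < x.
  by move=> hx; apply: le_lt_trans hx; apply: divr_ge0; lra.
have [R0 J_large] := Jf_coercive_on_Pf s_gt0 mu1_gt0 mu2_gt0 beta_gt0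
  (exponent_gt0 _ p_gt) (exponent_gt0 _ q_gt) (L2_supercritical_gap s_gt0 p_gt)
  (L2_supercritical_gap s_gt0 q_gt) (L2_supercritical_gap s_gt0 r_gt) a b M.
by exists R0 => u gu v gv hu hv _; exact: J_large.
Qed.
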